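(* Let $p>3$ be a prime. Then the integral homology $\mathrm{Kh}_{alg}(p,\infty;\mathbb{Z})=H(A_p(\mathbb{Z}),d_2)$ contains a nonzero element of additive order $p$ in the bidegree with $q$-degree $2p+6$ and $t$-degree $2p$.
   Context: For a commutative ring $R$ and $n\ge1$, let $A_n(R)=R[x_0,\dots,x_{n-1}]\otimes_R\Lambda_R[\xi_0,\dots,\xi_{n-1}]$ be the free graded-commutative $R$-algebra on even generators $x_k$ and odd generators $\xi_k$. It is bigraded by declaring $x_k$ to have $q$-degree $2k+2$ and $t$-degree $2k$, and $\xi_k$ to have $q$-degree $2k+4$ and $t$-degree $2k+1$. Let $d_2$ be the unique $R$-linear odd derivation ($d_2(ab)=d_2(a)b+(-1)^{|a|}a\,d_2(b)$, $|a|$ = number of $\xi$'s mod 2) with $d_2(x_k)=0$ and $d_2(\xi_k)=\sum_{i=0}^{k}x_ix_{k-i}$; it preserves $q$-degree and lowers $t$-degree by 1. $\mathrm{Kh}_{alg}(n,\infty;R)=H(A_n(R),d_2)$. *)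

(* Concrete model of A_n(Z) = Z[x_0..x_{n-1}] (x) Lambda[xi_0..xi_{n-1}]
   as formal Z-linear combinations of monomials x^e xi_S, with xi_S the product of the
   xi_k, k in S, taken in increasing order of k. *)
From HB Require Import structures.
From mathcomp Require Import all_boot all_order all_algebra.
Set Implicit Arguments. Unset Strict Implicit. Unset Printing Implicit Defensive.
Import Order.TTheory GRing.Theory Num.Theory.
Local Open Scope ring_scope.

Definition mono (n : nat) := ({ffun 'I_n -> nat} * {set 'I_n})%type.

Definition elt (n : nat) := seq (int * mono n).

Definition coef n (f : elt n) (m : mono n) : int :=
  \sum_(t <- f) (if t.2 == m then t.1 else 0).

Definition eqA n (f g : elt n) : Prop := forall m, coef f m = coef g m.

Definition scaleA n (k : int) (f : elt n) : elt n := [seq (k * t.1, t.2) | t <- f].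

Definition qdeg n (m : mono n) : nat :=
  (\sum_(k < n) m.1 k * (2 * k + 2) + \sum_(k in m.2) (2 * k + 4))%N.
Definition tdeg n (m : mono n) : nat :=
  (\sum_(k < n) m.1 k * (2 * k) + \sum_(k in m.2) (2 * k + 1))%N.

Definition homog n (q t : nat) (f : elt n) : bool :=
  all (fun u => (qdeg u.2 == q) && (tdeg u.2 == t)) f.

Definition incx n (e : {ffun 'I_n -> nat}) (i : 'I_n) : {ffun 'I_n -> nat} :=
  [ffun k => (e k + (k == i))%N].

(* d_2 of a monomial x^e xi_S: Leibniz rule with sign (-1)^{#{s in S | s < j}},
   d_2(xi_j) = sum_{i=0}^{j} x_i x_{j-i}, and d_2(x_k) = 0 *)
Definition ord_subr n (j : 'I_n) (i : nat) : 'I_n :=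
  Ordinal (leq_ltn_trans (leq_subr i j) (ltn_ord j)).

Definition d2_mono n (m : mono n) : elt n :=
  flatten [seq [seq ((-1) ^+ #|[set s in m.2 | (s < j)%N]|,
                     (incx (incx m.1 i) (ord_subr j i), m.2 :\ j))
               | i : 'I_n <- enum 'I_n & (i <= j)%N]
          | j : 'I_n <- enum m.2].

Definition d2 n (f : elt n) : elt n :=
  flatten [seq scaleA u.1 (d2_mono u.2) | u <- f].

Definition is_cycle n (z : elt n) : Prop := eqA (d2 z) [::].
Definition is_boundary n (z : elt n) : Prop := exists w : elt n, eqA (d2 w) z.

From mathcomp Require Import all_boot all_order all_algebra zify.
Set Implicit Arguments. Unset Strict Implicit. Unset Printing Implicit Defensive.
Import Order.TTheory GRing.Theory Num.Theory.
Local Open Scope ring_scope.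

(* Let T_p be the sum of x_i x_a x_b over all ordered triples (i, a, b) with i + a + b = p.
   It contains no xi, so it is a cycle, homogeneous of bidegree (2p+6, 2p).
   - T_p is p-torsion in homology: for w = \sum_i 3i x_i xi_(p-i) one has d2 w = p T_p,
     since d2 (x_i xi_j) = x_i \sum_(a+b=j) x_a x_b and 3i may be replaced by i + a + b
     after symmetrizing over the triple.
   - No smaller multiple is a boundary: the Z-linear functional Psi supported on the
     xi-free cubic monomials m = x_i x_a x_b with i + a + b = p, given by
        Psi m = -1 if x_0 | m but x_1 does not, 0 if x_0 x_1 | m, e_1(m) if x_0 does not,
     satisfies Psi (d2 (x_i xi_(p-i))) = p for i = 1 and 0 for i <> 1, and it vanishes on
     the boundaries of all other monomials; hence Psi maps boundaries into pZ.  Applying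
     Psi to d2 w = p T_p gives Psi T_p = 3, so k T_p is a boundary iff p | 3k iff p | k. *)

Lemma coef_flatten n (L : seq (elt n)) m : coef (flatten L) m = \sum_(f <- L) coef f m.
Proof. by rewrite /coef big_flatten. Qed.

Lemma coef_scale n k (f : elt n) m : coef (scaleA k f) m = k * coef f m.
Proof.
rewrite /coef /scaleA big_map mulr_sumr; apply: eq_bigr => t _ /=.
by case: ifP; rewrite ?mulr0.
Qed.

Lemma coef_map n (A : Type) (s : seq A) (c : A -> int) (M : A -> mono n) m :
  coef [seq (c x, M x) | x <- s] m = \sum_(x <- s) (if M x == m then c x else 0).
Proof. by rewrite /coef big_map. Qed.

Lemma coef_d2 n (f : elt n) m :
  coef (d2 f) m = \sum_(u <- f) u.1 * coef (d2_mono u.2) m.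
Proof. by rewrite /d2 coef_flatten big_map; apply: eq_bigr => u _; rewrite coef_scale. Qed.

Lemma coef_d2_scale n k (f : elt n) m : coef (d2 (scaleA k f)) m = k * coef (d2 f) m.
Proof.
rewrite !coef_d2 /scaleA big_map mulr_sumr.
by apply: eq_bigr => u _; rewrite mulrA.
Qed.

Definition wsum n (e : {ffun 'I_n -> nat}) (g : 'I_n -> nat) : nat :=
  (\sum_(k < n) e k * g k)%N.
Definition degx n (e : {ffun 'I_n -> nat}) : nat := wsum e (fun _ => 1%N).
Definition weightx n (e : {ffun 'I_n -> nat}) : nat := wsum e (fun k => val k).
Definition multx n (e : {ffun 'I_n -> nat}) (v : nat) : nat :=
  wsum e (fun k => nat_of_bool (val k == v)).

Definition xvar n (i : 'I_n) : {ffun 'I_n -> nat} := [ffun k => nat_of_bool (k == i)].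

Lemma wsum_incx n (e : {ffun 'I_n -> nat}) a g : wsum (incx e a) g = (wsum e g + g a)%N.
Proof.
rewrite /wsum -(big_pred1_eq addn a g) big_mkcond /= -big_split /=.
apply: eq_bigr => k _; rewrite ffunE mulnDl.
by case: eqP => [->|]; rewrite ?mul1n ?mul0n ?addn0.
Qed.

Lemma wsum_xvar n (i : 'I_n) g : wsum (xvar i) g = g i.
Proof.
rewrite /wsum -(big_pred1_eq addn i g) big_mkcond /=.
by apply: eq_bigr => k _; rewrite ffunE; case: eqP; rewrite ?mul1n ?mul0n.
Qed.

Lemma degx1_xvar n (e : {ffun 'I_n -> nat}) : degx e = 1%N -> exists i, e = xvar i.
Proof.
rewrite /degx /wsum => h.
have [/existsP[k ek_gt0]|none] := boolP [exists k, 0 < e k]%N; last first.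
  exfalso; move: h; rewrite big1 // => i _.
  by move/existsPn: none => /(_ i); rewrite lt0n negbK muln1 => /eqP.
exists k; move: h; rewrite (bigD1 k) //= muln1 => h.
have ek1 : e k = 1%N by apply/eqP; rewrite eqn_leq ek_gt0 andbT -h leq_addr.
have rest0 : (\sum_(i < n | i != k) e i * 1 = 0)%N.
  by move/eqP: h; rewrite ek1 -{2}(addn0 1%N) eqn_add2l => /eqP.
apply/ffunP => i; rewrite ffunE; case: eqP => [->//|/eqP ne].
move/eqP: rest0; rewrite sum_nat_eq0 => /forall_inP/(_ i ne).
by rewrite muln1 => /eqP.
Qed.

Definition cubic n (i a b : 'I_n) : mono n := (incx (incx (xvar i) a) b, set0).

Lemma cubicC1 n (i a b : 'I_n) : cubic a i b = cubic i a b.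
Proof. by rewrite /cubic; congr (_, _); apply/ffunP => k; rewrite !ffunE; lia. Qed.

Lemma cubicC2 n (i a b : 'I_n) : cubic b a i = cubic i a b.
Proof. by rewrite /cubic; congr (_, _); apply/ffunP => k; rewrite !ffunE; lia. Qed.

Lemma d2_mono_xvar n (i j : 'I_n) :
  d2_mono (xvar i, [set j]) =
  [seq (1, cubic i a (ord_subr j a)) | a <- [seq a : 'I_n <- enum 'I_n | (a <= j)%N]].
Proof.
rewrite /d2_mono /= enum_set1 /= cats0 setDv.
have -> : #|[set s in [set j] | (s < j)%N]| = 0%N.
  apply/eqP; rewrite cards_eq0; apply/eqP/setP => s; rewrite !inE.
  by case: eqP => // ->; rewrite ltnn.
by rewrite expr0 map_comp.
Qed.

(* The functional Psi.  psi_val n e0 e1 d w is its value on an xi-free monomial with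
   x_0-exponent e0, x_1-exponent e1, degree d and weight w. *)

Definition psi_val (n e0 e1 d w : nat) : int :=
  if (d == 3%N) && (w == n) then
    (if (0 < e0)%N then (if e1 == 0%N then -1 else 0) else e1%:Z) else 0.

Definition psi n (m : mono n) : int :=
  if m.2 == set0 then psi_val n (multx m.1 0) (multx m.1 1) (degx m.1) (weightx m.1)
  else 0.

Definition Psi n (f : elt n) : int := \sum_(t <- f) t.1 * psi t.2.

Lemma Psi_coef n (f : elt n) (s : seq (mono n)) : uniq s ->
  (forall t, t \in f -> t.2 \in s) -> Psi f = \sum_(m <- s) psi m * coef f m.
Proof.
move=> s_uniq f_sub; rewrite /Psi /coef.
under [RHS]eq_bigr => m _ do rewrite mulr_sumr.
rewrite exchange_big /= [LHS]big_seq [RHS]big_seq; apply: eq_bigr => t tf.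
rewrite (bigD1_seq t.2) ?f_sub // eqxx big1 => [|m ne]; last first.
  by rewrite eq_sym (negbTE ne) mulr0.
by rewrite -[RHS]/(psi t.2 * t.1 + 0) addr0 mulrC.
Qed.

Lemma eqA_Psi n (f g : elt n) : eqA f g -> Psi f = Psi g.
Proof.
move=> fg; set s := undup (map snd (f ++ g)).
have s_uniq : uniq s by apply: undup_uniq.
rewrite (@Psi_coef _ f s) // ?(@Psi_coef _ g s) //.
- by apply: eq_bigr => m _; rewrite fg.
- by move=> t tg; rewrite mem_undup map_f // mem_cat tg orbT.
- by move=> t tf; rewrite mem_undup map_f // mem_cat tf.
Qed.

Lemma Psi_scale n k (f : elt n) : Psi (scaleA k f) = k * Psi f.
Proof. by rewrite /Psi big_map mulr_sumr; apply: eq_bigr => t _; rewrite mulrA. Qed.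

Lemma Psi_flatten n (L : seq (elt n)) : Psi (flatten L) = \sum_(f <- L) Psi f.
Proof. by rewrite /Psi big_flatten. Qed.

Lemma Psi_map n (A : Type) (s : seq A) (c : A -> int) (M : A -> mono n) :
  Psi [seq (c x, M x) | x <- s] = \sum_(x <- s) c x * psi (M x).
Proof. by rewrite /Psi big_map. Qed.

Lemma Psi_d2 n (f : elt n) : Psi (d2 f) = \sum_(u <- f) u.1 * Psi (d2_mono u.2).
Proof. by rewrite /d2 Psi_flatten big_map; apply: eq_bigr => u _; rewrite Psi_scale. Qed.

Lemma psi_incx2 n (e : {ffun 'I_n -> nat}) (a b : 'I_n) :
  psi (incx (incx e a) b, set0) =
  psi_val n (multx e 0 + (a == 0 :> nat) + (b == 0 :> nat))%N
            (multx e 1 + (a == 1 :> nat) + (b == 1 :> nat))%N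
            (degx e + 1 + 1)%N (weightx e + a + b)%N.
Proof. by rewrite /psi eqxx /multx /degx /weightx !wsum_incx. Qed.

Lemma Posz_sum (r : seq nat) (F : nat -> nat) :
  ((\sum_(a <- r) F a)%N)%:Z = \sum_(a <- r) (F a)%:Z.
Proof. exact: (big_morph Posz PoszD). Qed.

Lemma sum_nat_indicator N c : (\sum_(0 <= a < N) nat_of_bool (a == c) = (c < N) :> nat)%N.
Proof.
elim: N => [|N IH]; first by rewrite big_geq.
rewrite big_nat_recr //= IH.
case: (ltngtP c N) => h.
- by rewrite ltnS (ltnW h).
- by rewrite ltnS leqNgt h.
- by rewrite h ltnSn.
Qed.

(* psi of a summand x_i x_a x_(j-a) of d2 (x_i xi_j), when i + j = n: the two end terms
   a = 0, a = j contribute -1 unless x_1 occurs, the middle terms contribute e_1. *)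
Lemma psi_val_slice_term (n i j a : nat) : (3 < n)%N -> (i < n)%N -> (j < n)%N ->
  (a <= j)%N ->
  psi_val n ((i == 0) + (a == 0) + (j - a == 0))%N ((i == 1) + (a == 1) + (j - a == 1))%N
          3 (i + a + (j - a))%N =
  if (i + j == n)%N then ((i == 1) + (a == 1) + (a.+1 == j))%N%:Z - ((a == 0) + (a == j))%N%:Z
  else 0.
Proof.
move=> n_gt3 i_lt j_lt aj.
have -> : (i + a + (j - a) = i + j)%N by lia.
rewrite /psi_val eqxx /=; case: eqP => [ij|//].
have -> : (j - a == 0)%N = (a == j) by apply/eqP/eqP; lia.
have -> : (j - a == 1)%N = (a.+1 == j) by apply/eqP/eqP; lia.
have -> : (i == 0)%N = false by apply/eqP; lia.
by case: (a =P 0%N) => ?; case: (a =P j) => ?; case: (i =P 1%N) => ?;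
   case: (a =P 1%N) => ?; case: (a.+1 =P j) => ? //=; lia.
Qed.

Lemma sum_psi_val_slice (n i j : nat) : (3 < n)%N -> (i < n)%N -> (j < n)%N ->
  \sum_(0 <= a < j.+1)
    psi_val n ((i == 0) + (a == 0) + (j - a == 0))%N ((i == 1) + (a == 1) + (j - a == 1))%N
            3 (i + a + (j - a))%N =
  if (i == 1%N) && (i + j == n)%N then n%:Z else 0.
Proof.
move=> n_gt3 i_lt j_lt.
rewrite big_nat_cond (eq_bigr (fun a => if (i + j == n)%N then
    ((i == 1) + (a == 1) + (a.+1 == j))%N%:Z - ((a == 0) + (a == j))%N%:Z else 0)); last first.
  by move=> a; rewrite andbT ltnS => aj; exact: psi_val_slice_term.
rewrite -big_nat_cond; case: eqP => ij; last by rewrite andbF big1.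
rewrite andbT sumrB -!Posz_sum !big_split /= !sum_nat_indicator ltnSn.
have j_gt0 : (0 < j)%N by lia.
have -> : (\sum_(0 <= a < j.+1) nat_of_bool (a.+1 == j) = 1)%N.
  rewrite (eq_bigr (fun a => nat_of_bool (a == j.-1))) ?sum_nat_indicator.
    by rewrite ltnS leq_pred.
  by move=> a _; congr nat_of_bool; apply/eqP/eqP; lia.
rewrite ltnS j_gt0 (eq_bigr (fun _ => nat_of_bool (i == 1%N))) // sum_nat_const_nat subn0.
case: (i =P 1%N) => i1 /=; last by rewrite muln0.
have -> : (j.+1 = n)%N by lia.
by rewrite muln1 -addnA PoszD addrK.
Qed.

Lemma Psi_d2_xvar n (i j : 'I_n) : (3 < n)%N ->
  Psi (d2_mono (xvar i, [set j])) = if (i == 1%N :> nat) && (i + j == n)%N then n%:Z else 0.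
Proof.
move=> n_gt3; rewrite d2_mono_xvar Psi_map big_filter big_enum_cond /=.
under eq_bigr => a _ do rewrite mul1r psi_incx2 /multx /degx /weightx !wsum_xvar /=.
have := sum_psi_val_slice n_gt3 (ltn_ord i) (ltn_ord j).
move: (val i) (val j) (ltn_ord j) => {}i {}j j_lt.
pose G a := psi_val n ((i == 0) + (a == 0) + (j - a == 0))%N
  ((i == 1) + (a == 1) + (j - a == 1))%N 3 (i + a + (j - a))%N.
move=> <-.
rewrite (eq_bigr (fun a : 'I_n => G a)) // -(big_mkord (fun a => a <= j)%N G).
by rewrite (eq_bigl (fun a => a < j.+1)%N) // -(big_nat_widen 0 j.+1 n xpredT).
Qed.

(* Psi takes values in nZ on the d2 of every monomial: only monomials x_i xi_j can
   produce xi-free cubic terms, and those are covered by Psi_d2_xvar. *)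
Lemma Psi_d2_mono_dvd n (m : mono n) : (3 < n)%N -> (n %| Psi (d2_mono m))%Z.
Proof.
move=> n_gt3; rewrite /d2_mono Psi_flatten big_map.
apply: rpred_sum => j _; rewrite Psi_map /= -mulr_sumr; apply: dvdz_mull.
case: (m.2 :\ j =P set0) => [S_j|S_j]; last first.
  by rewrite big1 ?dvdz0 // => a _; rewrite /psi /=; case: eqP.
rewrite S_j; case: (degx m.1 =P 1%N) => [deg1|deg_ne1]; last first.
  rewrite big1 ?dvdz0 // => a _; rewrite psi_incx2 /psi_val.
  by have -> : (degx m.1 + 1 + 1 == 3)%N = false by apply/eqP; lia.
have [i ->] := degx1_xvar deg1.
have := Psi_d2_xvar i j n_gt3; rewrite d2_mono_xvar Psi_map !big_filter /=.
under eq_bigr => a _ do rewrite mul1r.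
by move=> ->; case: ifP => _; [exact: dvdzz | exact: dvdz0].
Qed.

Lemma Psi_boundary_dvd n (w : elt n) : (3 < n)%N -> (n %| Psi (d2 w))%Z.
Proof.
by move=> n_gt3; rewrite Psi_d2; apply: rpred_sum => u _; apply/dvdz_mull/Psi_d2_mono_dvd.
Qed.

Definition sum3 n (t : 'I_n * 'I_n * 'I_n) : nat := (t.1.1 + t.1.2 + t.2)%N.
Definition cubic3 n (t : 'I_n * 'I_n * 'I_n) : mono n := cubic t.1.1 t.1.2 t.2.

Definition zcyc n : elt n :=
  [seq (1, cubic3 t) | t <- [seq t <- enum {: 'I_n * 'I_n * 'I_n} | sum3 t == n]].

Lemma zcyc_cycle n : is_cycle (zcyc n).
Proof.
move=> m; rewrite coef_d2 /coef big_nil big1_seq // => u /andP[_ /mapP[t _ ->]] /=.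
by rewrite /d2_mono /= enum_set0 /= big_nil mulr0.
Qed.

Lemma zcyc_homog n : homog (2 * n + 6) (2 * n) (zcyc n).
Proof.
apply/allP => u /mapP[t]; rewrite mem_filter => /andP[/eqP t_sum _] -> /=.
rewrite /qdeg /tdeg /= !big_set0 !addn0.
rewrite -!/(wsum _ _) !wsum_incx !wsum_xvar /sum3 in t_sum *.
by apply/andP; split; apply/eqP; lia.
Qed.

(* Summing over triples on the simplex i + a + b = n, the three coordinates play
   symmetric roles since cubic3 is invariant under permutation of the triple. *)
Section TripleSums.
Variables (n : nat) (m : mono n).
Local Notation hit t := (if cubic3 t == m then 1 else 0).

Lemma sum_triples_swap12 (F : 'I_n -> int) :
  \sum_t (if sum3 t == n then F t.1.2 * hit t else 0) =
  \sum_t (if sum3 t == n then F t.1.1 * hit t else 0).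
Proof.
pose sw (t : 'I_n * 'I_n * 'I_n) := (t.1.2, t.1.1, t.2).
have sw_inj : injective sw by apply: (@inv_inj _ sw) => [[[i a] b]].
rewrite (reindex_inj sw_inj); apply: eq_bigr => [[[i a] b]] _.
by rewrite /sum3 /cubic3 /sw /= cubicC1 (addnC a i).
Qed.

Lemma sum_triples_swap13 (F : 'I_n -> int) :
  \sum_t (if sum3 t == n then F t.2 * hit t else 0) =
  \sum_t (if sum3 t == n then F t.1.1 * hit t else 0).
Proof.
pose sw (t : 'I_n * 'I_n * 'I_n) := (t.2, t.1.2, t.1.1).
have sw_inj : injective sw by apply: (@inv_inj _ sw) => [[[i a] b]].
rewrite (reindex_inj sw_inj); apply: eq_bigr => [[[i a] b]] _.
by rewrite /sum3 /cubic3 /sw /= cubicC2; congr (if _ then _ else _); apply/eqP/eqP; lia.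
Qed.

Lemma coef_zcyc_weighted :
  n%:Z * coef (zcyc n) m =
  \sum_t (if sum3 t == n then (3 * t.1.1)%N%:Z * hit t else 0).
Proof.
rewrite /zcyc coef_map big_filter big_enum_cond big_mkcond /= mulr_sumr.
transitivity (\sum_t ((if sum3 t == n then (nat_of_ord t.1.1)%:Z * hit t else 0) +
                      (if sum3 t == n then (nat_of_ord t.1.2)%:Z * hit t else 0) +
                      (if sum3 t == n then (nat_of_ord t.2)%:Z * hit t else 0))).
  apply: eq_bigr => t _; case: eqP => [t_sum|]; last by rewrite mulr0 !addr0.
  by rewrite -!mulrDl -!PoszD -/(sum3 t) t_sum.
rewrite !big_split /= (sum_triples_swap12 (fun i => (nat_of_ord i)%:Z)).
rewrite (sum_triples_swap13 (fun i => (nat_of_ord i)%:Z)) -!big_split /=.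
apply: eq_bigr => t _; case: ifP => _; last by rewrite !addr0.
by rewrite -!mulrDl -!PoszD; congr (Posz _ * _); lia.
Qed.

End TripleSums.

(* The boundary identity d2 w = (n+1) T_(n+1), for w = \sum_i 3i x_i xi_(n+1-i); the
   index n+1-i of xi is read in 'I_(n+1) (the term i = 0 has coefficient 0 anyway). *)

Definition compl_ord n (i : 'I_n.+1) : 'I_n.+1 := inord (n.+1 - i).

Definition wbound n : elt n.+1 :=
  [seq ((3 * i)%N%:Z, (xvar i, [set compl_ord i])) | i : 'I_n.+1 <- enum 'I_n.+1].

Lemma sum_triples N (G : 'I_N * 'I_N * 'I_N -> int) :
  \sum_t G t = \sum_(i < N) \sum_(a < N) \sum_(b < N) G (i, a, b).
Proof.
transitivity (\sum_(p : 'I_N * 'I_N) \sum_(b < N) G (p, b)).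
  by rewrite (pair_big xpredT xpredT (fun p b => G (p, b))) /=; apply: eq_bigr => [[p b]].
rewrite (pair_big xpredT xpredT (fun i a => \sum_(b < N) G (i, a, b))) /=.
by apply: eq_bigr => [[i a]].
Qed.

Lemma sum_last_coord n (i a : 'I_n.+1) (F : 'I_n.+1 -> int) : (0 < i)%N ->
  \sum_(b < n.+1) (if (i + a + b == n.+1)%N then F b else 0) =
  if (a <= compl_ord i)%N then F (ord_subr (compl_ord i) a) else 0.
Proof.
move=> i_gt0; have i_lt := ltn_ord i.
have compl_i : nat_of_ord (compl_ord i) = (n.+1 - i)%N by rewrite /compl_ord inordK //; lia.
case: leqP => a_le; last first.
  by rewrite big1 // => b _; case: eqP => // h; move: a_le; rewrite compl_i; lia.
rewrite (bigD1 (ord_subr (compl_ord i) a)) //= compl_i.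
have -> : (i + a + (n.+1 - i - a) == n.+1)%N by apply/eqP; lia.
rewrite big1 ?addr0 // => b b_ne; case: eqP => // h.
by case/eqP: b_ne; apply/val_inj; rewrite /= compl_i; lia.
Qed.

Lemma coef_d2_wbound n m : coef (d2 (wbound n)) m =
  \sum_t (if sum3 t == n.+1 then (3 * t.1.1)%N%:Z * (if cubic3 t == m then 1 else 0)
          else 0).
Proof.
rewrite coef_d2 /wbound big_map big_enum /= sum_triples; apply: eq_bigr => i _ /=.
have [i0|i_gt0] := posnP i.
  by rewrite i0 mul0r big1 // => a _; rewrite big1 // => b _; rewrite mul0r; case: ifP.
rewrite d2_mono_xvar coef_map big_filter big_enum_cond big_mkcond mulr_sumr /=.
apply: eq_bigr => a _.
rewrite (sum_last_coord a (fun b => (3 * i)%N%:Z * (if cubic3 (i, a, b) == m then 1 else 0))) //.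
by case: ifP; rewrite ?mulr0.
Qed.

Lemma d2_wbound n : eqA (d2 (wbound n)) (scaleA n.+1%:Z (zcyc n.+1)).
Proof. by move=> m; rewrite coef_d2_wbound coef_scale coef_zcyc_weighted. Qed.

(* Psi T_(n+1) = 3: only the term i = 1 of w contributes to Psi (d2 w) = (n+1) Psi T. *)
Lemma Psi_zcyc n : (3 < n.+1)%N -> Psi (zcyc n.+1) = 3.
Proof.
move=> n_gt3.
have Psi_dw : Psi (d2 (wbound n)) = (3 * n.+1)%N%:Z.
  rewrite Psi_d2 /wbound big_map big_enum /= (bigD1 (inord 1)) //=.
  have inord1 : nat_of_ord (inord 1 : 'I_n.+1) = 1%N by rewrite inordK //; lia.
  have compl1 : nat_of_ord (compl_ord (inord 1 : 'I_n.+1)) = n.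
    by rewrite /compl_ord inord1 inordK // subSS subn0.
  rewrite Psi_d2_xvar // inord1 compl1 eqxx add1n eqxx muln1 big1 ?addr0 // => i i_ne1.
  rewrite Psi_d2_xvar //.
  have -> : (val i == 1%N) = false.
    apply/negbTE; apply: contra i_ne1 => /eqP i1; apply/eqP/val_inj.
    by rewrite /= inord1.
  by rewrite /= mulr0.
apply: (@mulfI _ n.+1%:Z) => //.
by rewrite -Psi_scale -(eqA_Psi (@d2_wbound n)) Psi_dw PoszM mulrC.
Qed.

Theorem mainTheorem2 (p : nat) (hp : prime p) (hp3 : (3 < p)%N) :
  exists z : elt p,
    [/\ homog (2 * p + 6) (2 * p) z, is_cycle z &
        forall k : nat, is_boundary (scaleA (k%:Z) z) <-> (p %| k)%N].
Proof.
case: p hp hp3 => [//|n] hp hp3.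
exists (zcyc n.+1); split; [exact: zcyc_homog | exact: zcyc_cycle | move=> k].
split=> [[w dw] | /dvdnP[q ->]].
- have : (n.+1 %| k%:Z * 3)%Z.
    rewrite -(Psi_zcyc hp3) -Psi_scale -(eqA_Psi dw); exact: Psi_boundary_dvd.
  rewrite -PoszM dvdzE /= (Euclid_dvdM _ _ hp) => /orP[//|/(dvdn_leq (isT : (0 < 3)%N))]; lia.
- exists (scaleA q%:Z (wbound n)) => m.
  by rewrite coef_d2_scale d2_wbound !coef_scale mulrA PoszM.
Qed.
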